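(* Let $n\ge1$, let $\mathcal{X}_0=\{x_0\}$ be a singleton and let $\mathcal{X}_1,\dots,\mathcal{X}_n$ (states) and $\mathcal{O}_1,\dots,\mathcal{O}_n$ (outputs) be finite non-empty sets. For each $k\in\{1,\dots,n\}$ let $\underline{Q}_k(\cdot\mid z_{k-1})$ ($z_{k-1}\in\mathcal{X}_{k-1}$) be coherent lower previsions on gambles on $\mathcal{X}_k$ and $\underline{S}_k(\cdot\mid z_k)$ ($z_k\in\mathcal{X}_k$) coherent lower previsions on gambles on $\mathcal{O}_k$, and let $\underline{P}_k(\cdot\mid z_{k-1})$ and $\underline{E}_k(\cdot\mid z_k)$ be the joint models of the imprecise hidden Markov model described in the context. Assume that all local upper previsions are positive: $\overline{Q}_k(\{z_k\}\mid z_{k-1})>0$ and $\overline{S}_k(\{o_k\}\mid z_k)>0$ for all $k\in\{1,\dots,n\}$, $z_{k-1}\in\mathcal{X}_{k-1}$, $z_k\in\mathcal{X}_k$, $o_k\in\mathcal{O}_k$. Then for all $k\in\{1,\dots,n\}$, $z_{k-1}\in\mathcal{X}_{k-1}$, $z_k\in\mathcal{X}_k$ and $o_{k:n}\in\mathcal{O}_{k:n}$: $$\overline{P}_k(\{o_{k:n}\}\mid z_{k-1})>0\quad\text{and}\quad \overline{E}_k(\{o_{k:n}\}\mid z_k)>0,$$ where these denote the upper probabilities of the event that the outputs $(O_k,\dots,O_n)$ equal $o_{k:n}$.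
   Context: A gamble on a finite set $\mathcal{Y}$ is a real-valued map on $\mathcal{Y}$. A coherent lower prevision $\underline{P}$ on gambles on $\mathcal{Y}$ satisfies: $\underline{P}(f)\ge\min f$; $\underline{P}(\lambda f)=\lambda\underline{P}(f)$ for $\lambda\ge0$; $\underline{P}(f+g)\ge\underline{P}(f)+\underline{P}(g)$. Its conjugate upper prevision is $\overline{P}(f)=-\underline{P}(-f)$; for an event $A$, $\underline{P}(A)=\underline{P}(\mathbb{I}_A)$, $\overline{P}(A)=\overline{P}(\mathbb{I}_A)$ with $\mathbb{I}_A$ the indicator. Conditional lower previsions are families of such, indexed by the value of the conditioning variable, and upper versions are obtained by conjugacy pointwise. For $k\le\ell$ write $\mathcal{X}_{k:\ell}=\times_{r=k}^\ell\mathcal{X}_r$, $\mathcal{O}_{k:\ell}=\times_{r=k}^\ell\mathcal{O}_r$, with generic elements $x_{k:\ell}$, $o_{k:\ell}$; $\mathbb{I}_{o_{k:n}}$ is the indicator of $\{o_{k:n}\}$ viewed as a gamble on $\mathcal{X}_{k:n}\times\mathcal{O}_{k:n}$ (or $\mathcal{X}_{k+1:n}\times\mathcal{O}_{k:n}$). Joint model (credal tree under epistemic irrelevance for the hidden Markov chain $X_1\to\dots\to X_n$ with outputs $X_k\to O_k$): $\underline{E}_n(\cdot\mid z_n):=\underline{S}_n(\cdot\mid z_n)$; for $k\in\{1,\dots,n-1\}$, $\underline{E}_k(\cdot\mid X_k)$, on gambles on $\mathcal{X}_{k+1:n}\times\mathcal{O}_{k:n}$, is the conditionally independent natural extension of $\underline{S}_k(\cdot\mid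 X_k)$ and $\underline{P}_{k+1}(\cdot\mid X_k)$, i.e. the pointwise smallest separately coherent conditional lower prevision that is jointly coherent with and coincides on their domains with both of them and expresses that, conditional on $X_k$, the variables $O_k$ and $(X_{k+1:n},O_{k+1:n})$ are epistemically irrelevant to one another. For $k\in\{1,\dots,n\}$ and every gamble $f$ on $\mathcal{X}_{k:n}\times\mathcal{O}_{k:n}$, $\underline{P}_k(f\mid z_{k-1}):=\underline{Q}_k\big(\sum_{z_k\in\mathcal{X}_k}\mathbb{I}_{\{z_k\}}\,\underline{E}_k(f(z_k,\cdot)\mid z_k)\,\big|\,z_{k-1}\big)$ (marginal extension). $\underline{Q}_1(\cdot\mid x_0)$ is the marginal model of $X_1$, and the global joint model is $\underline{P}:=\underline{P}_1(\cdot\mid x_0)$. *)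

From HB Require Import structures.
From mathcomp Require Import all_boot all_order all_algebra.
From mathcomp Require Import reals.
Set Implicit Arguments. Unset Strict Implicit. Unset Printing Implicit Defensive.
Import Order.TTheory GRing.Theory Num.Theory.
Local Open Scope ring_scope.

(* Ys X O m k  =  X_k x (O_k x (X_{k+1} x (O_{k+1} x ... (X_{k+m-1} x
   (O_{k+m-1} x unit))))), i.e. the space X_{k:k+m-1} x O_{k:k+m-1}.         *)
Fixpoint Ys (X O : nat -> finType) (m k : nat) : finType :=
  match m with
  | 0 => unit
  | m'.+1 => (X k * (O k * Ys X O m' k.+1))%type
  end.

Fixpoint Os (O : nat -> finType) (m k : nat) : finType :=
  match m with
  | 0 => unit
  | m'.+1 => (O k * Os O m' k.+1)%type
  end.

Fixpoint outs (X O : nat -> finType) (m k : nat) : Ys X O m k -> Os O m k :=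
  match m return Ys X O m k -> Os O m k with
  | 0 => fun _ => tt
  | m'.+1 => fun w => (w.2.1, @outs X O m' k.+1 w.2.2)
  end.

(* gambles on A are maps A -> R; a lower prevision is a map on all gambles *)
Definition coherent_lp (R : realType) (A : finType) (P : (A -> R) -> R) : Prop :=
  [/\ (forall (f : A -> R) (c : R), (forall a, c <= f a) -> c <= P f),
      (forall (l : R) (f : A -> R), 0 <= l -> P (fun a => l * f a) = l * P f) &
      (forall f g : A -> R, P f + P g <= P (fun a => f a + g a))].

Definition upper (R : realType) (A : finType) (P : (A -> R) -> R) (f : A -> R) : R :=
  - P (fun a => - f a).

Definition ind (R : realType) (A : finType) (p : pred A) : A -> R :=
  fun a => (p a)%:R.

(* A conditional lower prevision on gambles on W, conditional on the partition
   of W given by the fibres of [cpart] (a variable with values in [cidx]). *)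
Record clp (R : realType) (W : finType) := CLP {
  cidx : finType;
  cpart : W -> cidx;
  cval : cidx -> (W -> R) -> R }.
Arguments cidx {R W} c.
Arguments cpart {R W} c _.
Arguments cval {R W} c _ _.

(* G(f|B) = sum_{B in partition} I_B (f - P(f|B)) *)
Definition Gclp (R : realType) (W : finType) (c : clp R W) (f : W -> R) : W -> R :=
  fun w => f w - cval c (cpart c w) f.

(* w belongs to S(f) := union of the blocks B with I_B f <> 0 *)
Definition inSupp (R : realType) (W : finType) (c : clp R W) (f : W -> R) (w : W) : bool :=
  [exists w', (cpart c w' == cpart c w) && (f w' != 0)].

(* Walley's (joint) coherence of a finite family of conditional lower
   previsions, all with the linear space of all gambles as domain:
   for all f_j, j0, f0, and block B0 of the j0-th partition (given by a point w0),
     sup_{w in B0 u S(f)} [ sum_j G_j(f_j|B_j) - G_{j0}(f0|B0) ](w) >= 0.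
   Since the set B0 u S(f) is finite and non-empty, the sup is >= 0 iff some
   point of it has a non-negative value. *)
Definition coherent_family (R : realType) (W : finType) (m : nat)
    (F : 'I_m -> clp R W) : Prop :=
  forall (fs : 'I_m -> W -> R) (j0 : 'I_m) (f0 : W -> R) (w0 : W),
  exists w : W,
    ((cpart (F j0) w == cpart (F j0) w0) || [exists j, inSupp (F j) (fs j) w]) &&
    (0 <= \sum_(j < m) Gclp (F j) (fs j) w
          - (if cpart (F j0) w == cpart (F j0) w0 then Gclp (F j0) f0 w else 0)).

Definition fam3 (R : realType) (W : finType) (c1 c2 c3 : clp R W) : 'I_3 -> clp R W :=
  fun j => nth c1 [:: c1; c2; c3] j.

Definition uncond (R : realType) (W : finType) (P : (W -> R) -> R) : clp R W :=
  @CLP R W unit (fun _ => tt) (fun _ => P).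

(* epistemic irrelevance of the first variable to the second:
   E(f | a) := P2 (f(a, .)) *)
Definition cond_fst (R : realType) (A B : finType) (P2 : (B -> R) -> R)
  : clp R (A * B)%type :=
  @CLP R (A * B)%type A (fun w => w.1) (fun a f => P2 (fun b => f (a, b))).

(* epistemic irrelevance of the second variable to the first:
   E(f | b) := P1 (f(., b)) *)
Definition cond_snd (R : realType) (A B : finType) (P1 : (A -> R) -> R)
  : clp R (A * B)%type :=
  @CLP R (A * B)%type B (fun w => w.2) (fun b f => P1 (fun a => f (a, b))).

Definition indep_candidate (R : realType) (A B : finType)
    (P1 : (A -> R) -> R) (P2 : (B -> R) -> R) (E : ((A * B)%type -> R) -> R) : Prop :=
  [/\ coherent_lp E,
      (forall g : A -> R, E (fun w => g w.1) = P1 g),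
      (forall h : B -> R, E (fun w => h w.2) = P2 h) &
      coherent_family (fam3 (uncond E) (cond_fst A P2) (cond_snd B P1))].

Definition is_indep_nat_ext (R : realType) (A B : finType)
    (P1 : (A -> R) -> R) (P2 : (B -> R) -> R) (E : ((A * B)%type -> R) -> R) : Prop :=
  indep_candidate P1 P2 E /\
  forall E', indep_candidate P1 P2 E' -> forall f, E f <= E' f.

Arguments coherent_lp {R A} P.
Arguments upper {R A} P f.
Arguments ind {R A} p _.
Arguments is_indep_nat_ext {R A B} P1 P2 E.
Arguments indep_candidate {R A B} P1 P2 E.

From HB Require Import structures.
From mathcomp Require Import all_boot all_order all_algebra.
From mathcomp Require Import reals.
From mathcomp Require Import boolp classical_sets.
From mathcomp Require Import ring lra.
Set Implicit Arguments. Unset Strict Implicit. Unset Printing Implicit Defensive.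
Import Order.TTheory GRing.Theory Num.Theory.
Local Open Scope ring_scope.

(* Positivity propagates backwards along the chain. For a marginal extension
   the upper probability of a pair (x, w) is at least the upper probability of
   x times that of w given x. For the independent natural extension of S and
   P2 one compares with the strong product, the lower envelope of the products
   p * q of the linear previsions p >= S and q >= P2: when S and P2 are
   positive it is itself a candidate, so it dominates the natural extension,
   and choosing p and q that charge the given point makes its upper
   probability positive. The envelope theorem for coherent lower previsions on
   finite spaces, needed to choose p and q, follows from a finite-dimensional
   Hahn-Banach theorem proved by induction on the dimension. Finally, the event
   that the outputs equal o_{k:n} contains a point. *)

Section FiniteHahnBanach.
Variable R : realType.

Lemma inf_le_elem (E : set R) (lb y : R) :
  (forall v, E v -> lb <= v) -> E y -> inf E <= y.
Proof. by move=> hlb Ey; apply: (ge_inf (E := E)) => //; exists lb. Qed.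

Lemma le_inf_lbound (E : set R) (x y : R) :
  E y -> (forall v, E v -> x <= v) -> x <= inf E.
Proof. by move=> Ey hx; apply: lb_le_inf; [exists y|]. Qed.

Definition sublinear n (U : ('I_n -> R) -> R) :=
  (forall x y, U (fun i => x i + y i) <= U x + U y) /\
  (forall l x, 0 <= l -> U (fun i => l * x i) = l * U x).

Lemma sublinear0 n (U : ('I_n -> R) -> R) : sublinear U -> U (fun _ => 0) = 0.
Proof.
case=> _ hom; have := hom 0 (fun _ => 0) (lexx 0).
by rewrite [RHS]mul0r; under eq_fun do rewrite mulr0.
Qed.

Definition vsnoc n (y : 'I_n -> R) (t : R) : 'I_n.+1 -> R :=
  fun i => if unlift ord_max i is Some j then y j else t.

Definition vinit n (y : 'I_n.+1 -> R) : 'I_n -> R := fun j => y (lift ord_max j).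

Lemma vsnoc_lift n (y : 'I_n -> R) t j : vsnoc y t (lift ord_max j) = y j.
Proof. by rewrite /vsnoc liftK. Qed.

Lemma vsnoc_max n (y : 'I_n -> R) t : vsnoc y t ord_max = t.
Proof. by rewrite /vsnoc unlift_none. Qed.

Lemma vsnocK n (y : 'I_n.+1 -> R) : vsnoc (vinit y) (y ord_max) = y.
Proof. by apply: funext => i; rewrite /vsnoc /vinit; case: unliftP => [j ->|->]. Qed.

Lemma vsnocD n (y z : 'I_n -> R) t s :
  vsnoc (fun i => y i + z i) (t + s) = (fun i => vsnoc y t i + vsnoc z s i).
Proof. by apply: funext => i; rewrite /vsnoc; case: unliftP. Qed.

Lemma vsnocZ n (y : 'I_n -> R) l t :
  vsnoc (fun i => l * y i) (l * t) = (fun i => l * vsnoc y t i).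
Proof. by apply: funext => i; rewrite /vsnoc; case: unliftP. Qed.

Lemma vsnoc0 n : vsnoc (fun _ : 'I_n => 0) 0 = (fun _ => 0).
Proof. by apply: funext => i; rewrite /vsnoc; case: unliftP. Qed.

Lemma big_ord_lift_max n (F : 'I_n.+1 -> R) :
  \sum_(i < n.+1) F i = \sum_(j < n) F (lift ord_max j) + F ord_max.
Proof.
rewrite big_ord_recr /=; congr (_ + _); apply: eq_bigr => j _; congr F.
by apply: val_inj => /=; rewrite /bump leqNgt ltn_ord.
Qed.

Lemma sum_vsnoc n (w : 'I_n -> R) c y t :
  \sum_i vsnoc w c i * vsnoc y t i = \sum_i w i * y i + c * t.
Proof. by rewrite big_ord_lift_max !vsnoc_max; under eq_bigr do rewrite !vsnoc_lift. Qed.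

Lemma convex_subgradient (phi : R -> R) t0 :
  (forall r u, 0 < r -> 0 < u -> (r + u) * phi t0 <= r * phi (t0 - u) + u * phi (t0 + r)) ->
  exists c, forall s, c * s <= phi (t0 + s) - phi t0.
Proof.
move=> cvx.
pose slopes v := exists2 s, 0 < s & v = (phi (t0 + s) - phi t0) / s.
have slopes_lb u : 0 < u -> forall v, slopes v -> (phi t0 - phi (t0 - u)) / u <= v.
  move=> u0 v [s s0 ->]; rewrite ler_pdivrMr // mulrAC ler_pdivlMr //.
  have := cvx s u s0 u0; lra.
exists (inf slopes) => s; case: (ltgtP s 0) => [sn|sp|->]; last by rewrite addr0 subrr mulr0.
- have u0 : 0 < - s by rewrite oppr_gt0.
  have : (phi t0 - phi (t0 - - s)) / - s <= inf slopes.
    by apply: le_inf_lbound (slopes_lb _ u0); exists 1.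
  rewrite opprK ler_pdivrMr // => h; lra.
- have : inf slopes <= (phi (t0 + s) - phi t0) / s.
    by apply: (inf_le_elem (slopes_lb 1 ltr01)); exists s.
  by rewrite ler_pdivlMr.
Qed.

Lemma sublinear_convex n (U : ('I_n.+1 -> R) -> R) y t0 r u :
  sublinear U -> 0 < r -> 0 < u ->
  (r + u) * U (vsnoc y t0) <= r * U (vsnoc y (t0 - u)) + u * U (vsnoc y (t0 + r)).
Proof.
move=> [sub hom] r0 u0; have ru0 : 0 < r + u by rewrite addr_gt0.
have hr : 0 <= r / (r + u) by rewrite divr_ge0 // ltW.
have hu : 0 <= u / (r + u) by rewrite divr_ge0 // ltW.
have e : vsnoc y t0 = (fun i => r / (r + u) * vsnoc y (t0 - u) i +
                                 u / (r + u) * vsnoc y (t0 + r) i).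
  apply: funext => i; rewrite /vsnoc; case: unliftP => [j _|_].
    by rewrite -mulrDl -mulrDl divff ?mul1r // gt_eqF.
  by field; rewrite gt_eqF.
have := sub (fun i => r / (r + u) * vsnoc y (t0 - u) i)
            (fun i => u / (r + u) * vsnoc y (t0 + r) i).
rewrite -e (hom _ _ hr) (hom _ _ hu) => h.
rewrite -(@ler_pM2l _ (r + u)^-1) ?invr_gt0 // mulrA mulVf ?gt_eqF // mul1r.
by apply: (le_trans h); rewrite mulrDr !mulrA ![_^-1 * _]mulrC.
Qed.

Section InfimalProjection.
Variables (n : nat) (U : ('I_n.+1 -> R) -> R) (y0 : 'I_n -> R) (t0 c : R).
Hypothesis sU : sublinear U.
Hypothesis subgrad : forall s, c * s <= U (vsnoc y0 (t0 + s)) - U (vsnoc y0 t0).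

(* A linear minorant of [infimal_proj] touching it at [y0], extended by the
   slope [c], is a linear minorant of [U] touching it at [vsnoc y0 t0]. *)
Definition infimal_proj (y : 'I_n -> R) :=
  inf (fun v => exists t, v = U (vsnoc y t) - c * t).

Lemma infimal_proj_le y t : infimal_proj y <= U (vsnoc y t) - c * t.
Proof.
apply: (@inf_le_elem _ (U (vsnoc y0 t0) - c * t0 - U (vsnoc (fun i => y0 i - y i) 0)));
  last by exists t.
move=> _ [s ->]; have [sub _] := sU.
have := sub (vsnoc y s) (vsnoc (fun i => y0 i - y i) 0).
rewrite -vsnocD addr0; under eq_fun do rewrite addrC subrK.
have := subgrad (s - t0); rewrite addrCA subrr addr0; lra.
Qed.

Lemma le_infimal_proj y x :
  (forall t, x <= U (vsnoc y t) - c * t) -> x <= infimal_proj y.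
Proof.
move=> h; apply: (@le_inf_lbound _ _ (U (vsnoc y 0) - c * 0)); first by exists 0.
by move=> _ [t ->]; apply: h.
Qed.

Lemma infimal_proj_at : infimal_proj y0 = U (vsnoc y0 t0) - c * t0.
Proof.
apply/eqP; rewrite eq_le infimal_proj_le /=.
by apply: le_infimal_proj => t; have := subgrad (t - t0); rewrite addrCA subrr addr0; lra.
Qed.

Lemma infimal_projD y z :
  infimal_proj (fun i => y i + z i) <= infimal_proj y + infimal_proj z.
Proof.
have [sub _] := sU.
suff : infimal_proj (fun i => y i + z i) - infimal_proj y <= infimal_proj z by lra.
apply: le_infimal_proj => s.
suff : infimal_proj (fun i => y i + z i) - (U (vsnoc z s) - c * s) <= infimal_proj y by lra.
apply: le_infimal_proj => t.
have := infimal_proj_le (fun i => y i + z i) (t + s); rewrite vsnocD.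
have := sub (vsnoc y t) (vsnoc z s); lra.
Qed.

Lemma infimal_projZ_le l y : 0 < l -> infimal_proj (fun i => l * y i) <= l * infimal_proj y.
Proof.
move=> l0; rewrite mulrC -ler_pdivrMr //; apply: le_infimal_proj => t.
rewrite ler_pdivrMr // mulrC; have [_ hom] := sU.
have := infimal_proj_le (fun i => l * y i) (l * t); rewrite vsnocZ hom; [lra | exact: ltW].
Qed.

Lemma infimal_proj_sublinear : sublinear infimal_proj.
Proof.
split; first exact: infimal_projD.
move=> l y; rewrite le_eqVlt => /orP[/eqP<-|l0].
  have -> : (fun i : 'I_n => 0 * y i) = (fun _ => 0) by apply: funext => i; rewrite mul0r.
  rewrite mul0r; apply/eqP; rewrite eq_le; apply/andP; split.
    by have := infimal_proj_le (fun _ => 0) 0; rewrite vsnoc0 (sublinear0 sU) mulr0 subr0.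
  have := infimal_projD y0 (fun _ => 0).
  have -> : (fun i => y0 i + 0) = y0 by apply: funext => i; rewrite addr0.
  lra.
apply/eqP; rewrite eq_le infimal_projZ_le //=.
rewrite mulrC -ler_pdivlMr //.
have il0 : 0 < l^-1 by rewrite invr_gt0.
have := infimal_projZ_le (fun i => l * y i) il0.
have -> : (fun i => l^-1 * (l * y i)) = y by apply: funext => i; rewrite mulKf ?gt_eqF.
by rewrite mulrC.
Qed.

End InfimalProjection.

Theorem finite_hahn_banach n (U : ('I_n -> R) -> R) : sublinear U -> forall x0,
  exists w : 'I_n -> R, (forall y, \sum_i w i * y i <= U y) /\
                        \sum_i w i * x0 i = U x0.
Proof.
elim: n U => [|n IH] U sU x0.
  have E0 (y : 'I_0 -> R) : y = (fun _ => 0) by apply: funext => -[].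
  by exists (fun _ => 0); split=> [y|]; rewrite big_ord0 ?(E0 x0) ?(E0 y) sublinear0.
have [c subgrad] := @convex_subgradient (fun t => U (vsnoc (vinit x0) t)) (x0 ord_max)
  (fun r u => @sublinear_convex _ U (vinit x0) (x0 ord_max) r u sU).
have [w [hw hwx0]] := IH _ (infimal_proj_sublinear sU subgrad) (vinit x0).
exists (vsnoc w c); split=> [y|].
  rewrite -{1}(vsnocK y) sum_vsnoc.
  have := hw (vinit y); have := infimal_proj_le sU subgrad (vinit y) (y ord_max).
  rewrite vsnocK; lra.
rewrite -{1}(vsnocK x0) sum_vsnoc hwx0 (infimal_proj_at sU subgrad) vsnocK; lra.
Qed.

End FiniteHahnBanach.

Section CoherentLowerPrevision.
Variables (R : realType) (A : finType).
Implicit Types (P : (A -> R) -> R) (f g p : A -> R).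

Lemma coherent_lp0 P : coherent_lp P -> P (fun _ => 0) = 0.
Proof.
case=> _ hom _; have := hom 0 (fun _ => 0) (lexx 0).
by rewrite [RHS]mul0r; under eq_fun do rewrite mulr0.
Qed.

Lemma coherent_lp_mono P f g : coherent_lp P -> (forall a, f a <= g a) -> P f <= P g.
Proof.
case=> lb _ sup fg; have := sup f (fun a => g a - f a).
have -> : (fun a => f a + (g a - f a)) = g by apply: funext => a; rewrite addrC subrK.
have : 0 <= P (fun a => g a - f a) by apply: lb => a; rewrite subr_ge0.
lra.
Qed.

Lemma coherent_lp_const P c : coherent_lp P -> P (fun _ => c) = c.
Proof.
move=> cP; have [lb _ sup] := cP.
have := sup (fun _ => c) (fun _ => - c).
have -> : (fun _ : A => c + - c) = (fun _ => 0) by apply: funext => a; rewrite subrr.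
have : c <= P (fun _ => c) by apply: lb.
have : - c <= P (fun _ => - c) by apply: lb.
rewrite coherent_lp0 //; lra.
Qed.

Lemma upper_mono P f g : coherent_lp P -> (forall a, f a <= g a) -> upper P f <= upper P g.
Proof. by move=> cP fg; rewrite lerN2; apply: coherent_lp_mono => // a; rewrite lerN2. Qed.

Lemma upper_ind_mono P (ev : pred A) a :
  coherent_lp P -> ev a -> upper P (ind (pred1 a)) <= upper P (ind ev).
Proof.
move=> cP ev_a; apply: upper_mono => // b; rewrite /ind /=.
by case: eqP => [->|_]; rewrite ?ev_a // ler0n.
Qed.

Lemma sum_mul_ind1 p a : \sum_b p b * ind (pred1 a) b = p a.
Proof.
rewrite (bigD1 a) //= /ind /= eqxx mulr1 big1 ?addr0 // => b /negbTE ->.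
by rewrite mulr0.
Qed.

Definition positive_lp P := coherent_lp P /\ forall a, 0 < upper P (ind (pred1 a)).

Lemma positive_lp_event P (ev : pred A) a : positive_lp P -> ev a -> 0 < upper P (ind ev).
Proof. by move=> [cP posP] ev_a; apply: lt_le_trans (posP a) (upper_ind_mono cP ev_a). Qed.

Definition dominates p P := forall g, P g <= \sum_a p a * g a.

Lemma sum_enum_rank (F : 'I_#|A| -> R) : \sum_a F (enum_rank a) = \sum_i F i.
Proof. by rewrite (reindex (@enum_rank A)) //; apply: onW_bij; exact: enum_rank_bij. Qed.

Theorem coherent_lp_envelope P f :
  coherent_lp P -> exists2 p, dominates p P & \sum_a p a * f a = P f.
Proof.
move=> [_ hom sup].
pose U (y : 'I_#|A| -> R) := - P (fun a => - y (enum_rank a)).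
have sU : sublinear U.
  split=> [x y|l x l0]; rewrite /U.
    have := sup (fun a => - x (enum_rank a)) (fun a => - y (enum_rank a)).
    have -> : (fun a => - (x (enum_rank a) + y (enum_rank a))) =
              (fun a => - x (enum_rank a) - y (enum_rank a)).
      by apply: funext => a; rewrite opprD.
    lra.
  by under eq_fun do rewrite -mulrN; rewrite hom // mulrN.
have U_enum g : U (fun i => - g (enum_val i)) = - P g.
  by rewrite /U; under eq_fun do rewrite enum_rankK opprK.
have sum_enum (w : 'I_#|A| -> R) g :
    \sum_i w i * - g (enum_val i) = - \sum_a w (enum_rank a) * g a.
  rewrite -sumrN -(sum_enum_rank (fun i => w i * - g (enum_val i))).
  by apply: eq_bigr => a _; rewrite enum_rankK mulrN.
have [w [hw hwf]] := finite_hahn_banach sU (fun i => - f (enum_val i)).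
exists (fun a => w (enum_rank a)) => [g|].
  by have := hw (fun i => - g (enum_val i)); rewrite sum_enum U_enum lerN2.
by move: hwf; rewrite sum_enum U_enum => /oppr_inj.
Qed.

Section Dominating.
Variables (P : (A -> R) -> R) (p : A -> R).
Hypotheses (cP : coherent_lp P) (dp : dominates p P).

Lemma dominates_ge0 a : 0 <= p a.
Proof.
have [lb _ _] := cP; rewrite -sum_mul_ind1; apply: le_trans (dp _).
by apply: lb => b; exact: ler0n.
Qed.

Lemma dominates_sum1 : \sum_a p a = 1.
Proof.
have := dp (fun _ => 1); have := dp (fun _ => -1).
rewrite !coherent_lp_const //.
under eq_bigr do rewrite mulrN1; under [in X in _ -> X]eq_bigr do rewrite mulr1.
rewrite sumrN; lra.
Qed.

Lemma dominates_support : exists a, 0 < p a.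
Proof.
apply/existsP; apply: contraT; rewrite negb_exists => /forallP p_le0.
have : \sum_a p a <= 0 by apply: sumr_le0 => a _; rewrite leNgt p_le0.
by rewrite dominates_sum1 ler10.
Qed.

End Dominating.

Lemma dominates_pos P a :
  coherent_lp P -> 0 < upper P (ind (pred1 a)) -> exists2 p, dominates p P & 0 < p a.
Proof.
move=> cP; have [p dp] := coherent_lp_envelope (fun b => - ind (pred1 a) b) cP.
under eq_bigr do rewrite mulrN; rewrite sumrN sum_mul_ind1 /upper => <-.
by rewrite opprK; exists p.
Qed.

End CoherentLowerPrevision.

Section ProductExpectation.
Variables (R : realType) (A B : finType).
Implicit Types (p : A -> R) (q : B -> R) (f g : A * B -> R).

Definition prod_expect p q f := \sum_(w : A * B) p w.1 * q w.2 * f w.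

Lemma prod_expect_iter p q f : prod_expect p q f = \sum_a p a * \sum_b q b * f (a, b).
Proof.
rewrite /prod_expect; symmetry; under eq_bigr do rewrite mulr_sumr.
by rewrite pair_bigA; apply: eq_bigr => -[a b] _ /=; rewrite mulrA.
Qed.

Lemma prod_expect_iter_snd p q f :
  prod_expect p q f = \sum_b q b * \sum_a p a * f (a, b).
Proof.
rewrite prod_expect_iter; under eq_bigr do rewrite mulr_sumr.
rewrite exchange_big /=; apply: eq_bigr => b _; rewrite mulr_sumr.
by apply: eq_bigr => a _ /=; ring.
Qed.

Lemma prod_expectD p q f g :
  prod_expect p q (fun w => f w + g w) = prod_expect p q f + prod_expect p q g.
Proof. by rewrite /prod_expect -big_split; apply: eq_bigr => w _; rewrite mulrDr. Qed.

Lemma prod_expectB p q f g :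
  prod_expect p q (fun w => f w - g w) = prod_expect p q f - prod_expect p q g.
Proof. by rewrite /prod_expect -sumrB; apply: eq_bigr => w _; rewrite mulrBr. Qed.

Lemma prod_expectN p q f :
  prod_expect p q (fun w => - f w) = - prod_expect p q f.
Proof. by rewrite /prod_expect -sumrN; apply: eq_bigr => w _; rewrite mulrN. Qed.

Lemma prod_expectZ p q l f :
  prod_expect p q (fun w => l * f w) = l * prod_expect p q f.
Proof. by rewrite /prod_expect mulr_sumr; apply: eq_bigr => w _; ring. Qed.

Lemma prod_expect_sum p q (I : finType) (F : I -> A * B -> R) :
  prod_expect p q (fun w => \sum_j F j w) = \sum_j prod_expect p q (F j).
Proof.
rewrite /prod_expect exchange_big; apply: eq_bigr => w _ /=.
by rewrite mulr_sumr.
Qed.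

Lemma prod_expect_ind1 p q x : prod_expect p q (ind (pred1 x)) = p x.1 * q x.2.
Proof. by rewrite /prod_expect sum_mul_ind1. Qed.

End ProductExpectation.

Lemma weighted_sumBr (R : realType) (C : finType) (r x : C -> R) c :
  \sum_i r i = 1 -> \sum_i r i * (x i - c) = \sum_i r i * x i - c.
Proof.
move=> r1; rewrite -[c in RHS]mul1r -r1 mulr_suml -sumrB.
by apply: eq_bigr => i _; rewrite mulrBr.
Qed.

Lemma finite_lbound (R : realType) (W : finType) (f : W -> R) : exists c, forall w, c <= f w.
Proof.
exists (- \sum_w `|f w|) => w; rewrite lerNl (bigD1 w) //=.
apply: (le_trans (y := `|f w|)); first by rewrite -normrN ler_norm.
by rewrite lerDl sumr_ge0.
Qed.

Section StrongProduct.
Variables (R : realType) (A B : finType) (S : (A -> R) -> R) (P2 : (B -> R) -> R).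
Hypotheses (cS : coherent_lp S) (cP2 : coherent_lp P2).

Section DominatingPair.
Variables (p : A -> R) (q : B -> R).
Hypotheses (dp : dominates p S) (dq : dominates q P2).

Lemma prod_weight_ge0 w : 0 <= p w.1 * q w.2.
Proof. by rewrite mulr_ge0 // ?(dominates_ge0 cS dp) ?(dominates_ge0 cP2 dq). Qed.

Lemma prod_expect_fst g : prod_expect p q (fun w => g w.1) = \sum_a p a * g a.
Proof.
rewrite prod_expect_iter; apply: eq_bigr => a _ /=.
by rewrite -mulr_suml (dominates_sum1 cP2 dq) mul1r.
Qed.

Lemma prod_expect_snd h : prod_expect p q (fun w => h w.2) = \sum_b q b * h b.
Proof.
rewrite prod_expect_iter_snd; apply: eq_bigr => b _ /=.
by rewrite -mulr_suml (dominates_sum1 cS dp) mul1r.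
Qed.

Lemma prod_expect_const c : prod_expect p q (fun _ => c) = c.
Proof. by rewrite (prod_expect_fst (fun _ => c)) -mulr_suml (dominates_sum1 cS dp) mul1r. Qed.

Lemma prod_expect_mono f g : (forall w, f w <= g w) -> prod_expect p q f <= prod_expect p q g.
Proof. by move=> fg; apply: ler_sum => w _; apply: ler_wpM2l; [exact: prod_weight_ge0|]. Qed.

Lemma prod_expect_Gcond_fst f : 0 <= prod_expect p q (Gclp (cond_fst A P2) f).
Proof.
rewrite prod_expect_iter; apply: sumr_ge0 => a _.
apply: mulr_ge0; first exact: (dominates_ge0 cS dp).
rewrite /Gclp /= weighted_sumBr ?(dominates_sum1 cP2 dq) //.
by rewrite subr_ge0; exact: dq.
Qed.

Lemma prod_expect_Gcond_snd f : 0 <= prod_expect p q (Gclp (cond_snd B S) f).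
Proof.
rewrite prod_expect_iter_snd; apply: sumr_ge0 => b _.
apply: mulr_ge0; first exact: (dominates_ge0 cP2 dq).
rewrite /Gclp /= weighted_sumBr ?(dominates_sum1 cS dp) //.
by rewrite subr_ge0; exact: dp.
Qed.

Lemma prod_expect_ge0_witness (V : A * B -> R) (adm : pred (A * B)) :
  (forall w, ~~ adm w -> V w = 0) -> 0 <= prod_expect p q V ->
  (exists2 w, adm w & 0 < p w.1 * q w.2) -> exists w, adm w && (0 <= V w).
Proof.
move=> V0 EV_ge0 [w1 adm_w1 pos_w1]; apply/existsP; apply: contraT.
rewrite negb_exists => /forallP V_lt0.
have V_lt0' w : adm w -> V w < 0 by move=> adm_w; have := V_lt0 w; rewrite adm_w ltNge.
suff : prod_expect p q V < 0 by rewrite ltNge EV_ge0.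
rewrite /prod_expect (bigD1 w1) //= -[ltRHS](addr0 0) ltr_leD //.
  by rewrite pmulr_rlt0 // V_lt0'.
apply: sumr_le0 => w _; case: (boolP (adm w)) => [adm_w|/V0 ->]; last by rewrite mulr0.
by rewrite mulr_ge0_le0 ?prod_weight_ge0 // ltW ?V_lt0'.
Qed.

End DominatingPair.

Definition strong_product (f : A * B -> R) :=
  inf (fun v => exists p q, [/\ dominates p S, dominates q P2 & v = prod_expect p q f]).

Lemma dominates_exists (C : finType) (P : (C -> R) -> R) :
  coherent_lp P -> exists p, dominates p P.
Proof. by move=> cP; have [p dp _] := coherent_lp_envelope (fun _ => 0) cP; exists p. Qed.

Lemma strong_product_le f p q :
  dominates p S -> dominates q P2 -> strong_product f <= prod_expect p q f.
Proof.
have [c c_lb] := finite_lbound f; move=> dp dq; apply: (@inf_le_elem _ _ c).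
  move=> _ [p' [q' [dp' dq' ->]]]; rewrite -(prod_expect_const dp' dq' c).
  exact: prod_expect_mono.
by exists p, q.
Qed.

Lemma le_strong_product f x :
  (forall p q, dominates p S -> dominates q P2 -> x <= prod_expect p q f) ->
  x <= strong_product f.
Proof.
move=> h; have [p dp] := dominates_exists cS; have [q dq] := dominates_exists cP2.
apply: (@le_inf_lbound _ _ x (prod_expect p q f)); first by exists p, q.
by move=> _ [p' [q' [dp' dq' ->]]]; apply: h.
Qed.

Lemma strong_product_coherent : coherent_lp strong_product.
Proof.
split.
- move=> f c c_lb; apply: le_strong_product => p q dp dq.
  by rewrite -(prod_expect_const dp dq c); exact: prod_expect_mono.
- move=> l f; rewrite le_eqVlt => /orP[/eqP<-|l0].
    have [p dp] := dominates_exists cS; have [q dq] := dominates_exists cP2.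
    rewrite mul0r; apply/eqP; rewrite eq_le; apply/andP; split.
      by apply: le_trans (strong_product_le _ dp dq) _; rewrite prod_expectZ mul0r.
    by apply: le_strong_product => p' q' _ _; rewrite prod_expectZ mul0r.
  apply/eqP; rewrite eq_le; apply/andP; split.
    rewrite mulrC -ler_pdivrMr //; apply: le_strong_product => p q dp dq.
    by rewrite ler_pdivrMr // mulrC -prod_expectZ strong_product_le.
  by apply: le_strong_product => p q dp dq; rewrite prod_expectZ ler_pM2l // strong_product_le.
- move=> f g; apply: le_strong_product => p q dp dq.
  by rewrite prod_expectD lerD // strong_product_le.
Qed.

Lemma strong_product_fst g : strong_product (fun w => g w.1) = S g.
Proof.
apply/eqP; rewrite eq_le; apply/andP; split.
  have [p dp <-] := coherent_lp_envelope g cS; have [q dq] := dominates_exists cP2.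
  by rewrite -(prod_expect_fst _ dq) strong_product_le.
by apply: le_strong_product => p q dp dq; rewrite (prod_expect_fst _ dq).
Qed.

Lemma strong_product_snd h : strong_product (fun w => h w.2) = P2 h.
Proof.
apply/eqP; rewrite eq_le; apply/andP; split.
  have [q dq <-] := coherent_lp_envelope h cP2; have [p dp] := dominates_exists cS.
  by rewrite -(prod_expect_snd q dp) strong_product_le.
by apply: le_strong_product => p q dp dq; rewrite (prod_expect_snd q dp).
Qed.

End StrongProduct.

Lemma Gclp_off_support (R : realType) (W : finType) (c : clp R W) f w :
  (forall g, (forall w', cpart c w' = cpart c w -> g w' = 0) -> cval c (cpart c w) g = 0) ->
  ~~ inSupp c f w -> Gclp c f w = 0.
Proof.
move=> cval0 /existsPn f0; have f0_block w' : cpart c w' = cpart c w -> f w' = 0.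
  by move=> e; have := f0 w'; rewrite e eqxx negbK => /eqP.
by rewrite /Gclp cval0 // f0_block // subr0.
Qed.

Section IrrelevanceFamily.
Variables (R : realType) (A B : finType) (S : (A -> R) -> R) (P2 : (B -> R) -> R).
Hypotheses (cS : coherent_lp S) (cP2 : coherent_lp P2).

Definition irrelevance_family :=
  fam3 (uncond (strong_product S P2)) (cond_fst A P2) (cond_snd B S).

Lemma prod_expect_Gclp_ge0 p q j f : dominates p S -> dominates q P2 ->
  0 <= prod_expect p q (Gclp (irrelevance_family j) f).
Proof.
move=> dp dq; rewrite /irrelevance_family /fam3; case: j => [[|[|[|//]]] ?] /=.
- rewrite /Gclp /= prod_expectB (prod_expect_const cS cP2 dp dq) subr_ge0.
  exact: strong_product_le.
- exact: (prod_expect_Gcond_fst cS cP2 dp dq).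
- exact: (prod_expect_Gcond_snd cS cP2 dp dq).
Qed.

Lemma Gclp_irrelevance_family_off_support j f w :
  ~~ inSupp (irrelevance_family j) f w -> Gclp (irrelevance_family j) f w = 0.
Proof.
rewrite /irrelevance_family /fam3; case: j => [[|[|[|//]]] ?] /=;
  apply: Gclp_off_support => g /= g0.
- have -> : g = (fun _ => 0) by apply: funext => w'; exact: g0.
  exact: coherent_lp0 (strong_product_coherent cS cP2).
- have -> : (fun b => g (w.1, b)) = (fun _ => 0) by apply: funext => b; exact: g0.
  exact: coherent_lp0.
- have -> : (fun a => g (a, w.2)) = (fun _ => 0) by apply: funext => a; exact: g0.
  exact: coherent_lp0.
Qed.

Lemma coherent_at_trivial_block (fs : 'I_3 -> A * B -> R) f0 (w0 : A * B) :
  exists w, 0 <= \sum_j Gclp (irrelevance_family j) (fs j) w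
                 - (f0 w - strong_product S P2 f0).
Proof.
pose H w := \sum_j Gclp (irrelevance_family j) (fs j) w - f0 w.
have [w _ H_max] := @arg_maxP _ _ _ w0 xpredT H isT.
exists w; suff : - H w <= strong_product S P2 f0 by rewrite /H; lra.
apply: (le_strong_product cS cP2) => p q dp dq.
have EG_ge0 : 0 <= prod_expect p q (fun w => \sum_j Gclp (irrelevance_family j) (fs j) w).
  by rewrite prod_expect_sum; apply: sumr_ge0 => j _; exact: prod_expect_Gclp_ge0.
have : prod_expect p q H <= H w.
  rewrite -(prod_expect_const cS cP2 dp dq (H w)).
  by apply: (prod_expect_mono cS cP2 dp dq) => w'; exact: H_max.
rewrite /H prod_expectB; lra.
Qed.

Lemma coherent_at_block p q (fs : 'I_3 -> A * B -> R) (blk : pred (A * B)) (h : A * B -> R) :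
  dominates p S -> dominates q P2 ->
  prod_expect p q (fun w => if blk w then h w else 0) <= 0 ->
  (exists2 w, blk w & 0 < p w.1 * q w.2) ->
  exists w, (blk w || [exists j, inSupp (irrelevance_family j) (fs j) w]) &&
    (0 <= \sum_j Gclp (irrelevance_family j) (fs j) w - (if blk w then h w else 0)).
Proof.
move=> dp dq Eh_le0 [w1 blk_w1 pos_w1]; apply: (prod_expect_ge0_witness cS cP2 dp dq).
- move=> w; rewrite negb_or negb_exists => /andP[/negbTE-> /forallP no_supp].
  by rewrite subr0 big1 // => j _; apply: Gclp_irrelevance_family_off_support.
- rewrite prod_expectB prod_expect_sum.
  suff : 0 <= \sum_j prod_expect p q (Gclp (irrelevance_family j) (fs j)) by lra.
  by apply: sumr_ge0 => j _; exact: prod_expect_Gclp_ge0.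
- by exists w1; rewrite ?blk_w1.
Qed.

(* Positivity gives every block of the two conditioning partitions positive
   mass under a suitable product [p * q], which is what coherence needs. *)
Hypothesis posS : forall a, 0 < upper S (ind (pred1 a)).
Hypothesis posP2 : forall b, 0 < upper P2 (ind (pred1 b)).

Lemma irrelevance_family_coherent : coherent_family irrelevance_family.
Proof.
move=> fs j0 f0 w0; rewrite /irrelevance_family /fam3; case: j0 => [[|[|[|//]]] ?] /=.
- have [w hw] := coherent_at_trivial_block fs f0 w0; exists w; exact: hw.
- have [p dp p_pos] := dominates_pos cS (posS w0.1).
  have [q dq q_f0] := coherent_lp_envelope (fun b => f0 (w0.1, b)) cP2.
  have [b q_pos] := dominates_support cP2 dq.
  apply: (@coherent_at_block _ _ fs (fun w => w.1 == w0.1) _ dp dq);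
    last by exists (w0.1, b); rewrite /= ?eqxx ?mulr_gt0.
  rewrite prod_expect_iter; apply: sumr_le0 => a _ /=.
  have [->|_] := eqVneq a w0.1; last by rewrite big1 ?mulr0 // => b' _; rewrite mulr0.
  rewrite /Gclp /= weighted_sumBr ?(dominates_sum1 cP2 dq) // q_f0.
  by rewrite subrr mulr0.
- have [q dq q_pos] := dominates_pos cP2 (posP2 w0.2).
  have [p dp p_f0] := coherent_lp_envelope (fun a => f0 (a, w0.2)) cS.
  have [a p_pos] := dominates_support cS dp.
  apply: (@coherent_at_block _ _ fs (fun w => w.2 == w0.2) _ dp dq);
    last by exists (a, w0.2); rewrite /= ?eqxx ?mulr_gt0.
  rewrite prod_expect_iter_snd; apply: sumr_le0 => b _ /=.
  have [->|_] := eqVneq b w0.2; last by rewrite big1 ?mulr0 // => a' _; rewrite mulr0.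
  rewrite /Gclp /= weighted_sumBr ?(dominates_sum1 cS dp) // p_f0.
  by rewrite subrr mulr0.
Qed.

Lemma indep_nat_ext_positive E : is_indep_nat_ext S P2 E -> positive_lp E.
Proof.
case=> -[cE _ _ _] E_min; split=> // x.
have cand : indep_candidate S P2 (strong_product S P2).
  split; [ exact: strong_product_coherent | exact: strong_product_fst
         | exact: strong_product_snd | exact: irrelevance_family_coherent ].
have [p dp p_pos] := dominates_pos cS (posS x.1).
have [q dq q_pos] := dominates_pos cP2 (posP2 x.2).
have := E_min _ cand (fun w => - ind (pred1 x) w).
have := strong_product_le cS cP2 (fun w => - ind (pred1 x) w) dp dq.
rewrite prod_expectN prod_expect_ind1 /upper.
have : 0 < p x.1 * q x.2 by rewrite mulr_gt0.
lra.
Qed.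

End IrrelevanceFamily.

Section MarginalExtension.
Variables (R : realType) (X W : finType).
Variables (Q : (X -> R) -> R) (E : X -> (W -> R) -> R) (P : (X * W -> R) -> R).
Hypothesis P_def : forall f, P f = Q (fun x => E x (fun w => f (x, w))).

Lemma marginal_ext_coherent :
  coherent_lp Q -> (forall x, coherent_lp (E x)) -> coherent_lp P.
Proof.
move=> cQ cE; have [lbQ homQ supQ] := cQ; split=> [f c c_lb|l f l0|f g]; rewrite !P_def.
- by apply: lbQ => x; have [lb _ _] := cE x; apply: lb => w; exact: c_lb.
- by rewrite -homQ //; congr Q; apply: funext => x; have [_ hom _] := cE x; rewrite hom.
- apply: le_trans (supQ _ _) _; apply: coherent_lp_mono => // x.
  by have [_ _ sup] := cE x; exact: sup.
Qed.

Lemma marginal_ext_positive :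
  positive_lp Q -> (forall x, positive_lp (E x)) -> positive_lp P.
Proof.
move=> [cQ posQ] posE; have cP := marginal_ext_coherent cQ (fun x => (posE x).1).
split=> // -[x0 w0]; set u := upper (E x0) (ind (pred1 w0)).
(* the upper probability of (x0, w0) factorises as u times that of x0 *)
have E_ind x : E x (fun w => - ind (pred1 (x0, w0)) (x, w)) = u * - ind (pred1 x0) x.
  rewrite /ind /=; have [->|ne] := eqVneq x x0.
    rewrite mulr1n mulrN1 /u /upper opprK; congr E; apply: funext => w.
    by rewrite xpair_eqE eqxx.
  rewrite mulr0n oppr0 mulr0 -(coherent_lp0 (posE x).1); congr E; apply: funext => w.
  by rewrite xpair_eqE (negbTE ne) mulr0n oppr0.
have [_ homQ _] := cQ; rewrite /upper P_def (eq_fun E_ind) homQ;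
  last exact: ltW ((posE x0).2 w0).
by rewrite -mulrN mulr_gt0 ?((posE x0).2 w0) ?(posQ x0).
Qed.

End MarginalExtension.

Lemma outs_surj (X O : nat -> finType) m k :
  (forall j, (k <= j < k + m)%N -> (0 < #|X j|)%N) ->
  forall o : Os O m k, exists y : Ys X O m k, outs y = o.
Proof.
elim: m k => [|m IH] k X_nonempty o /=; first by exists tt; case: o.
case: o => o1 o'.
have /card_gt0P [x _] : (0 < #|X k|)%N by apply: X_nonempty; rewrite leqnn addnS ltnS leq_addr.
have [y' <-] : exists y' : Ys X O m k.+1, outs y' = o'.
  by apply: IH => j /andP[kj jm]; apply: X_nonempty; rewrite (ltnW kj) addnS -addSn.
by exists (x, (o1, y')).
Qed.

Unset Implicit Arguments.

Section ImpreciseHiddenMarkovModel.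
Variables (R : realType) (n : nat) (X O : nat -> finType)
  (Q : forall k : nat, X k.-1 -> (X k -> R) -> R)
  (S : forall k : nat, X k -> (O k -> R) -> R)
  (P : forall k m : nat, X k.-1 -> (Ys X O m.+1 k -> R) -> R)
  (E : forall k m : nat, X k -> ((O k * Ys X O m k.+1)%type -> R) -> R).
Hypothesis Q_coherent : forall k, (1 <= k <= n)%N -> forall z : X k.-1, coherent_lp (Q k z).
Hypothesis S_coherent : forall k, (1 <= k <= n)%N -> forall z : X k, coherent_lp (S k z).
Hypothesis Q_pos : forall k, (1 <= k <= n)%N -> forall (z : X k.-1) (x : X k),
  0 < upper (Q k z) (ind (pred1 x)).
Hypothesis S_pos : forall k, (1 <= k <= n)%N -> forall (z : X k) (o : O k),
  0 < upper (S k z) (ind (pred1 o)).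
Hypothesis E_last : forall (z : X n) (f : (O n * Ys X O 0 n.+1)%type -> R),
  E n 0%N z f = S n z (fun o => f (o, tt)).
Hypothesis E_indep : forall k m : nat, (1 <= k)%N -> (k + m.+1 = n)%N -> forall z : X k,
  is_indep_nat_ext (S k z) (P k.+1 m z) (E k m.+1 z).
Hypothesis P_marginal : forall k m : nat, (1 <= k)%N -> (k + m = n)%N ->
  forall (z : X k.-1) (f : Ys X O m.+1 k -> R),
  P k m z f = Q k z (fun x => E k m x (fun w => f (x, w))).

Lemma E_last_positive (z : X n) : (1 <= n)%N -> positive_lp (E n 0%N z).
Proof.
move=> n_ge1; have n_range : (1 <= n <= n)%N by rewrite n_ge1 leqnn.
have [lbS homS supS] := S_coherent n n_range z.
split.
  by split=> [f c c_lb|l f l0|f g]; rewrite !E_last; [apply: lbS | rewrite homS | apply: supS].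
move=> [o []]; rewrite /upper E_last.
have -> : (fun o' => - ind (pred1 (o, tt)) (o', tt)) = (fun o' => - ind (pred1 o) o' :> R).
  by apply: funext => o'; rewrite /ind /= xpair_eqE andbT.
exact: S_pos.
Qed.

Lemma Q_positive k : (1 <= k <= n)%N -> forall z, positive_lp (Q k z).
Proof. by move=> k_range z; split; [exact: Q_coherent | exact: Q_pos]. Qed.

Lemma hmm_positive m : forall k, (1 <= k)%N -> (k + m = n)%N ->
  (forall z, positive_lp (P k m z)) /\ (forall z, positive_lp (E k m z)).
Proof.
elim: m => [|m IH] k k_ge1 km_n.
  have E_pos z : positive_lp (E k 0 z).
    by rewrite addn0 in km_n; subst k; apply: E_last_positive.
  split=> // z.
  apply: (marginal_ext_positive (Q := Q k z) (E := E k 0) (P_marginal k 0 k_ge1 km_n z)) => //.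
  by apply: Q_positive; rewrite k_ge1 -km_n addn0 leqnn.
have k_range : (1 <= k <= n)%N by rewrite k_ge1 -km_n leq_addr.
have [P_pos _] := IH k.+1 isT (etrans (addSnnS k m) km_n).
have E_pos z : positive_lp (E k m.+1 z).
  exact: (indep_nat_ext_positive (S_coherent k k_range z) (P_pos z).1
            (S_pos k k_range z) (P_pos z).2 (E_indep k m k_ge1 km_n z)).
split=> // z.
apply: (marginal_ext_positive (Q := Q k z) (E := E k m.+1) (P_marginal k m.+1 k_ge1 km_n z)) => //.
exact: Q_positive.
Qed.

End ImpreciseHiddenMarkovModel.

Theorem proposition1 (R : realType) (n : nat) (X O : nat -> finType)
  (Q : forall k : nat, X k.-1 -> (X k -> R) -> R)
  (S : forall k : nat, X k -> (O k -> R) -> R)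
  (P : forall k m : nat, X k.-1 -> (Ys X O m.+1 k -> R) -> R)
  (E : forall k m : nat, X k -> ((O k * Ys X O m k.+1)%type -> R) -> R) :
  (1 <= n)%N ->
  #|X 0%N| = 1%N ->
  (forall k, (1 <= k <= n)%N -> (0 < #|X k|)%N) ->
  (forall k, (1 <= k <= n)%N -> (0 < #|O k|)%N) ->
  (forall k, (1 <= k <= n)%N -> forall z : X k.-1, coherent_lp (Q k z)) ->
  (forall k, (1 <= k <= n)%N -> forall z : X k, coherent_lp (S k z)) ->
  (forall k, (1 <= k <= n)%N -> forall (z : X k.-1) (x : X k),
      0 < upper (Q k z) (ind (pred1 x))) ->
  (forall k, (1 <= k <= n)%N -> forall (z : X k) (o : O k),
      0 < upper (S k z) (ind (pred1 o))) ->
  (forall (z : X n) (f : (O n * Ys X O 0 n.+1)%type -> R),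
      E n 0%N z f = S n z (fun o => f (o, tt))) ->
  (forall k m : nat, (1 <= k)%N -> (k + m.+1 = n)%N -> forall z : X k,
      is_indep_nat_ext (S k z) (P k.+1 m z) (E k m.+1 z)) ->
  (forall k m : nat, (1 <= k)%N -> (k + m = n)%N ->
      forall (z : X k.-1) (f : Ys X O m.+1 k -> R),
      P k m z f = Q k z (fun x => E k m x (fun w => f (x, w)))) ->
  forall k m : nat, (1 <= k)%N -> (k + m = n)%N ->
    (forall (z : X k.-1) (o : Os O m.+1 k),
        0 < upper (P k m z) (ind (fun w => outs w == o))) /\
    (forall (z : X k) (o : Os O m.+1 k),
        0 < upper (E k m z) (ind (fun w => (w.1, outs w.2) == o))).
Proof.
move=> _ _ X_nonempty _ Q_coherent S_coherent Q_pos S_pos E_last E_indep P_marginal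
  k m k_ge1 km_n.
have [P_pos E_pos] := hmm_positive R n X O Q S P E Q_coherent S_coherent Q_pos S_pos
  E_last E_indep P_marginal m k k_ge1 km_n.
have X_from j : (k <= j <= n)%N -> (0 < #|X j|)%N.
  by case/andP=> kj jn; apply: X_nonempty; rewrite (leq_trans k_ge1 kj).
split=> [z o|z [o1 o]].
- have [y <-] : exists y : Ys X O m.+1 k, outs y = o.
    by apply: outs_surj => j /andP[kj]; rewrite addnS ltnS km_n => jn; apply: X_from; rewrite kj.
  by apply: (positive_lp_event (a := y) (P_pos z)).
- have [y <-] : exists y : Ys X O m k.+1, outs y = o.
    apply: outs_surj => j /andP[kj]; rewrite addSn ltnS km_n => jn.
    by apply: X_from; rewrite (ltnW kj) jn.
  by apply: (positive_lp_event (a := (o1, y)) (E_pos z)).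
Qed.
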